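(* Fix $k\ge2$, $c>0$ and $\zeta_n\in(0,1]$ with $\limsup_{n\to\infty}\zeta_n(k-1)c^{k-1}<e$. For any sequence $G_n=(V_n,E_n)$ of asymptotically tree-like $k$-uniform hypergraphs, for all sufficiently large $n$ there is a unique $\mathbf x^\ast\in[0,c]^{V_n}$ with $F^{G_n}_{c,\zeta_n}(\mathbf x^\ast)=\mathbf x^\ast$.
   Context: Hypergraphs are simple. For a hypergraph $G$ and $S\subseteq V(G)$, $d_G(S)=|\{e\in E(G):S\subseteq e\}|$, $\Delta_\ell(G)=\max_{|S|=\ell}d_G(S)$, $\Delta(G)=\Delta_1(G)$ the maximum degree, and $\Gamma(G)$ is the maximum over distinct $v,v'$ of the number of $(k-1)$-sets $S$ with $S\cup\{v\},S\cup\{v'\}\in E(G)$. A sequence $(G_n)$ of $k$-uniform hypergraphs is asymptotically tree-like if, with $G=G_n$, $\Delta=\Delta(G)$, as $n\to\infty$: (1) $\Delta\to\infty$; (2) $\Delta_\ell(G)=o(\Delta^{\frac{k-\ell}{k-1}})$ for each $\ell\in\{2,\dots,k-1\}$; (3) $\Gamma(G)=o(\Delta)$; (4) $|E(G)|/|V(G)|=\Omega(\Delta)$. For a $k$-uniform hypergraph $G=(V,E)$ with maximum degree $\Delta$, the map $F^G_{c,\zeta}:[0,c]^V\to[0,c]^V$ is $(F^G_{c,\zeta}(\mathbf x))_v=c\exp\left(-\frac{\zeta}{\Delta}\sum_{e\ni v}\prod_{u\in e\setminus\{v\}}x_u\right)$. *)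

From HB Require Import structures.
From mathcomp Require Import all_boot all_order all_algebra.
From mathcomp Require Import all_classical all_reals all_analysis.
Set Implicit Arguments. Unset Strict Implicit. Unset Printing Implicit Defensive.
Import Order.TTheory GRing.Theory Num.Theory.
Local Open Scope ring_scope.

(* A (simple) hypergraph on the finite vertex type V is given by its edge set
   E : {set {set V}} (a set of sets, hence no repeated edges). *)
Section Hyper.
Variable V : finType.
Variable E : {set {set V}}.

Definition kuniform (k : nat) : bool := [forall e in E, #|e| == k].

Definition hdeg (S : {set V}) : nat := #|[set e in E | S \subset e]|.

Definition hDelta_l (l : nat) : nat := \max_(S : {set V} | #|S| == l) hdeg S.

Definition hDelta : nat := hDelta_l 1.

Definition hGamma (k : nat) : nat :=
  \max_(p : V * V | p.1 != p.2)
     #|[set S : {set V} | (#|S| == k.-1) && (S :|: [set p.1] \in E)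
                          && (S :|: [set p.2] \in E)]|.

Definition Fmap (R : realType) (c zeta : R) (x : V -> R) (v : V) : R :=
  c * expR (- (zeta / (hDelta%:R)) *
            \sum_(e in E | v \in e) \prod_(u in e :\ v) x u).

End Hyper.

Definition littleo_seq (R : realType) (u w : nat -> R) : Prop :=
  forall eps : R, 0 < eps -> exists N, forall n, (N <= n)%N -> `|u n| <= eps * `|w n|.

Definition bigOmega_seq (R : realType) (u w : nat -> R) : Prop :=
  exists2 C : R, 0 < C & exists N, forall n, (N <= n)%N -> C * `|w n| <= `|u n|.

Definition asymp_tree_like (R : realType) (k : nat) (V : nat -> finType)
  (E : forall n, {set {set V n}}) : Prop :=
  [/\ (forall n, kuniform (E n) k),
      (forall M : nat, exists N, forall n, (N <= n)%N -> (M <= hDelta (E n))%N),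
      (forall l : nat, (2 <= l <= k.-1)%N ->
         littleo_seq (fun n => (hDelta_l (E n) l)%:R : R)
                     (fun n => ((hDelta (E n))%:R : R) `^ ((k - l)%:R / (k.-1)%:R))),
      littleo_seq (fun n => (hGamma (E n) k)%:R : R) (fun n => (hDelta (E n))%:R)
    &
      bigOmega_seq (fun n => (#|E n|%:R / #|V n|%:R : R)) (fun n => (hDelta (E n))%:R)].

From HB Require Import structures.
From mathcomp Require Import all_boot all_order all_algebra.
From mathcomp Require Import all_classical all_reals all_analysis.
From mathcomp Require Import ring lra.
Import Order.TTheory GRing.Theory Num.Theory.
Set Implicit Arguments.
Unset Strict Implicit.
Unset Printing Implicit Defensive.
Local Open Scope ring_scope.

(* F is antitone on [0, c]^V, so the iterates [lower (i+1) = F (upper i)],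
   [upper (i+1) = F (lower i)] started from 0 and c bracket every fixed point,
   and the supremum of the lower iterates is a fixed point once the brackets
   shrink to points.  They do: if the loads of [upper i] and [lower i] differ by
   at most M everywhere, then two steps later they differ by at most
   [rate * M] with [rate = zeta (k - 1) c^(k-1) / e], the factor [1/e] coming from
   [expR ((1 - expR (- m)) S) <= 1 + m expR (S - 1)].  The limsup hypothesis
   makes [rate < 1] for all large n. *)

Section RealFacts.
Variable R : realType.

Lemma expR_shrink_le (S m : R) : 0 <= S -> 0 <= m ->
  expR ((1 - expR (- m)) * S) <= 1 + m * expR (S - 1).
Proof.
move=> S0 m0.
pose f x := x * expR (S - 1) - expR ((1 - expR (- x)) * S).
pose f' x := expR (S - 1) - expR ((1 - expR (- x)) * S) * (expR (- x) * S).
have df (x : R) : is_derive x (1 : R) f (f' x).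
  by apply: trigger_derive; rewrite /GRing.scale /f' /=; ring.
suff : f 0 <= f m.
  by rewrite /f mul0r oppr0 expR0 subrr mul0r expR0 sub0r; lra.
apply: (@ger0_derive1_ndecr _ f 0 m) => //.
- move=> x _; rewrite derive1E (@derive_val _ _ _ _ _ _ _ (df x)) subr_ge0.
  set y := expR (- x) * S.
  have -> : (1 - expR (- x)) * S = S - y by rewrite /y; ring.
  (* [f' x >= 0] amounts to [y <= expR (y - 1)], an instance of [1 + t <= expR t]. *)
  rewrite expRD -mulrA expRD ler_pM2l ?expR_gt0 // expRN mulrC.
  rewrite ler_pdivrMr ?expR_gt0 // -expRD.
  by have := expR_ge1Dx (-1 + y); rewrite addNKr.
- by apply: derivable_within_continuous => x _; exact: (@ex_derive _ _ _ _ _ _ _ (df x)).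
Qed.

Lemma expRN_sub_le_shrink (S S' m : R) : 0 <= S -> 0 <= m ->
  S - S' <= (1 - expR (- m)) * S -> expR (- S') - expR (- S) <= m * expR (-1).
Proof.
move=> S0 m0 hS.
have eS' : expR (- S') = expR (- S) * expR (S - S').
  by rewrite -expRD; congr expR; ring.
have shrink : expR (S - S') <= 1 + m * expR (S - 1).
  by apply: le_trans _ (expR_shrink_le S0 m0); rewrite ler_expR; lra.
have eS : expR (- S) * (1 + m * expR (S - 1)) = expR (- S) + m * expR (-1).
  by rewrite mulrDr mulr1 mulrCA -expRD; congr (_ + _ * expR _); ring.
have : expR (- S) * expR (S - S') <= expR (- S) * (1 + m * expR (S - 1)).
  by rewrite ler_pM2l ?expR_gt0.
rewrite eS' eS; lra.
Qed.

Lemma expRN_sub_le (a b : R) : 0 <= a <= b -> expR (- a) - expR (- b) <= b - a.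
Proof.
move=> /andP[a0 ab].
have -> : expR (- b) = expR (- a) * expR (- (b - a)) by rewrite -expRD; congr expR; ring.
have ea : expR (- a) <= 1 by rewrite expR_le1 oppr_le0.
have ebaN : expR (- (b - a)) <= 1 by rewrite expR_le1 oppr_le0 subr_ge0.
have := expR_ge1Dx (- (b - a)).
have : 0 <= (1 - expR (- a)) * (1 - expR (- (b - a))).
  by rewrite mulr_ge0 // subr_ge0.
lra.
Qed.

Lemma le_geometric_le0 (d r C : R) : 0 <= r < 1 ->
  (forall j, d <= C * r ^+ j) -> d <= 0.
Proof.
move=> /andP[r0 r1] hd; rewrite leNgt; apply/negP => d0.
have C0 : 0 < C by apply: lt_le_trans d0 (le_trans (hd 0%N) _); rewrite expr0 mulr1.
have r1' : `|r| < 1 by rewrite ger0_norm.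
have /cvgr0_norm_lt /(_ _ (divr_gt0 d0 C0)) [N _ /(_ N (leqnn N))] := cvg_expr r1'.
rewrite ger0_norm ?exprn_ge0 // ltr_pdivlMr // mulrC => hN.
by have := lt_le_trans hN (hd N); rewrite ltxx.
Qed.

Lemma limn_sup_lt_eventually (u : nat -> R) (B a : R) : (forall n, `|u n| <= B) ->
  limn_sup u < a -> exists N, forall n, (N <= n)%N -> u n < a.
Proof.
move=> uB.
have bu : bounded_fun u.
  rewrite /bounded_near; near=> M => x _ /=.
  apply: (le_trans (uB x)); near: M; apply: nbhs_pinfty_ge; exact: num_real.
rewrite limn_supE // => /inf_lt [].
  by exists (sups u 0%N); exists 0%N.
move=> _ [N _ <-] hN; exists N => n Nn.
apply: le_lt_trans hN; apply: ub_le_sup; last by exists n.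
by apply: has_ubound_sdrop; exact: bounded_fun_has_ubound.
Unshelve. all: end_near.
Qed.

End RealFacts.

Section FixedPoint.
Variables (R : realType) (V : finType) (E : {set {set V}}) (k : nat) (c zeta : R).
Hypothesis E_uniform : kuniform E k.
Hypothesis c_gt0 : 0 < c.
Hypothesis zeta_gt0 : 0 < zeta.
Hypothesis Delta_gt0 : (0 < hDelta E)%N.

Local Notation Delta := ((hDelta E)%:R : R).
Local Notation F := (Fmap E c zeta).

Definition load (x : V -> R) (v : V) : R :=
  zeta / Delta * \sum_(e in E | v \in e) \prod_(u in e :\ v) x u.

Let scale_ge0 : 0 <= zeta / Delta.
Proof. by rewrite divr_ge0 ?ler0n // ltW. Qed.

Lemma FmapE (x : V -> R) v : F x v = c * expR (- load x v).
Proof. by rewrite /Fmap /load mulNr. Qed.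

Lemma card_edges_at_le v : (#|[set e in E | v \in e]| <= hDelta E)%N.
Proof.
have -> : #|[set e in E | v \in e]| = hdeg E [set v].
  by apply: eq_card => e; rewrite !inE finset.sub1set.
by apply: (leq_bigmax_cond [set v]); rewrite cards1.
Qed.

Lemma sum_edges_at_le v (f : {set V} -> R) (C : R) : 0 <= C ->
  (forall e, e \in E -> v \in e -> f e <= C) ->
  \sum_(e in E | v \in e) f e <= Delta * C.
Proof.
move=> C0 hf.
apply: (@le_trans _ _ (\sum_(e in E | v \in e) C)).
  by apply: ler_sum => e /andP[]; exact: hf.
rewrite (eq_bigl (fun e => e \in [set e in E | v \in e])); last by move=> e; rewrite inE.
by rewrite sumr_const -[C *+ _]mulr_natl ler_wpM2r // ler_nat card_edges_at_le.
Qed.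

Lemma card_edgeD1 e v : e \in E -> v \in e -> #|e :\ v| = k.-1.
Proof.
move=> eE ve; move/forall_inP/(_ e eE)/eqP: E_uniform => <-.
by rewrite (cardsD1 v e) ve.
Qed.

Lemma load_ge0 (x : V -> R) v : (forall u, 0 <= x u) -> 0 <= load x v.
Proof.
move=> x0; rewrite mulr_ge0 // sumr_ge0 // => e _.
by apply: prodr_ge0 => u _.
Qed.

Lemma load_le (x : V -> R) v : (forall u, 0 <= x u <= c) -> load x v <= zeta * c ^+ k.-1.
Proof.
move=> hx; apply: (@le_trans _ _ (zeta / Delta * (Delta * c ^+ k.-1))).
  apply: ler_wpM2l => //; apply: sum_edges_at_le; first by rewrite exprn_ge0 // ltW.
  move=> e eE ve; rewrite -(card_edgeD1 eE ve) -prodr_const.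
  by apply: ler_prod => u _; exact: hx.
by rewrite mulrA divfK // pnatr_eq0 -lt0n.
Qed.

Lemma load_homo (x y : V -> R) v : (forall u, 0 <= x u) -> (forall u, x u <= y u) ->
  load x v <= load y v.
Proof.
move=> x0 xy; apply: ler_wpM2l => //; apply: ler_sum => e _.
by apply: ler_prod => u _; rewrite x0 xy.
Qed.

Lemma Fmap_gt0_le (x : V -> R) v : (forall u, 0 <= x u) -> 0 < F x v <= c.
Proof.
move=> x0; rewrite FmapE mulr_gt0 ?expR_gt0 //=.
by rewrite ger_pMr // expR_le1 oppr_le0 load_ge0.
Qed.

Lemma Fmap_anti (x y : V -> R) v : (forall u, 0 <= x u) -> (forall u, x u <= y u) ->
  F y v <= F x v.
Proof. by move=> x0 xy; rewrite !FmapE ler_pM2l // ler_expR lerN2 load_homo. Qed.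

Lemma prod_Fmap_edge (x : V -> R) e v : e \in E -> v \in e ->
  \prod_(u in e :\ v) F x u = c ^+ k.-1 * expR (- \sum_(u in e :\ v) load x u).
Proof.
move=> eE ve; under eq_bigr do rewrite FmapE.
by rewrite big_split /= prodr_const card_edgeD1 // -sumrN expR_sum.
Qed.

Lemma load_sub_le_shrink (x y : V -> R) (M : R) v : (forall u, 0 <= x u) ->
  (forall u, expR (- M) * x u <= y u) ->
  load x v - load y v <= (1 - expR (- ((k.-1)%:R * M))) * load x v.
Proof.
move=> x0 xy.
rewrite /load -mulrBr -sumrB [X in _ <= X]mulrCA.
apply: ler_wpM2l => //; rewrite mulr_sumr; apply: ler_sum => e /andP[eE ve].
have : expR (- ((k.-1)%:R * M)) * \prod_(u in e :\ v) x u <= \prod_(u in e :\ v) y u.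
  rewrite -mulrN expRM_natl -(card_edgeD1 eE ve) -prodr_const -big_split /=.
  by apply: ler_prod => u _; rewrite xy mulr_ge0 ?expR_ge0.
lra.
Qed.

Lemma load_Fmap_sub_le (x y : V -> R) (m : R) v : (forall u, 0 <= x u) -> 0 <= m ->
  (forall u, load x u - load y u <= (1 - expR (- m)) * load x u) ->
  load (F y) v - load (F x) v <= zeta * c ^+ k.-1 * (m * expR (-1)).
Proof.
move=> x0 m0 hxy.
rewrite /load -mulrBr -sumrB.
apply: (@le_trans _ _ (zeta / Delta * (Delta * (c ^+ k.-1 * (m * expR (-1)))))); last first.
  by rewrite mulrA divfK ?mulrA // pnatr_eq0 -lt0n.
apply: ler_wpM2l => //; apply: sum_edges_at_le => [|e eE ve].
  by rewrite !mulr_ge0 ?exprn_ge0 ?expR_ge0 // ltW.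
rewrite !prod_Fmap_edge // -mulrBr; apply: ler_wpM2l; first by rewrite exprn_ge0 // ltW.
apply: expRN_sub_le_shrink => //; first by rewrite sumr_ge0 // => u _; exact: load_ge0.
by rewrite -sumrB mulr_sumr; apply: ler_sum => u _; exact: hxy.
Qed.

Fixpoint bracket (i : nat) : (V -> R) * (V -> R) :=
  if i is j.+1 then (F (bracket j).2, F (bracket j).1) else (fun=> 0, fun=> c).

Definition lower i := (bracket i).1.
Definition upper i := (bracket i).2.

Lemma lowerS i : lower i.+1 = F (upper i). Proof. by []. Qed.
Lemma upperS i : upper i.+1 = F (lower i). Proof. by []. Qed.

Lemma bracket_ge0 i v : 0 <= lower i v /\ 0 <= upper i v.
Proof.
elim: i v => [|i IH] v; first by rewrite /lower /upper /= lexx ltW.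
have /andP[/ltW lo _] := Fmap_gt0_le v (fun u => (IH u).2).
by have /andP[/ltW up _] := Fmap_gt0_le v (fun u => (IH u).1).
Qed.

Lemma lower_ge0 i v : 0 <= lower i v. Proof. exact: (bracket_ge0 i v).1. Qed.
Lemma upper_ge0 i v : 0 <= upper i v. Proof. exact: (bracket_ge0 i v).2. Qed.

Lemma upper_le i v : upper i v <= c.
Proof.
case: i => [|i]; first exact: lexx.
by rewrite upperS; case/andP: (Fmap_gt0_le v (lower_ge0 i)).
Qed.

Lemma lower_le_upper i v : lower i v <= upper i v.
Proof.
elim: i v => [|i IH] v; first exact: ltW.
by rewrite lowerS upperS; apply: Fmap_anti => // u; exact: lower_ge0.
Qed.

Lemma bracket_step i v : lower i v <= lower i.+1 v /\ upper i.+1 v <= upper i v.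
Proof.
elim: i v => [|i IH] v.
  by split; [exact: lower_ge0 | exact: upper_le].
split.
- by apply: (@Fmap_anti (upper i.+1) (upper i)) => u; [exact: upper_ge0 | exact: (IH u).2].
- by apply: (@Fmap_anti (lower i) (lower i.+1)) => u; [exact: lower_ge0 | exact: (IH u).1].
Qed.

Lemma lower_homo v : nondecreasing_seq (lower^~ v).
Proof. by apply/nondecreasing_seqP => i; exact: (bracket_step i v).1. Qed.

Lemma upper_anti v : nonincreasing_seq (upper^~ v).
Proof. by apply/nonincreasing_seqP => i; exact: (bracket_step i v).2. Qed.

Lemma lower_le_upper_any i j v : lower i v <= upper j v.
Proof.
apply: le_trans (lower_homo v (leq_maxl i j)) _.
exact: le_trans (lower_le_upper _ v) (upper_anti v (leq_maxr i j)).
Qed.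

Lemma Fmap_in_bracket i (x : V -> R) v : (forall u, lower i u <= x u <= upper i u) ->
  lower i.+1 v <= F x v <= upper i.+1 v.
Proof.
move=> hx; have x0 u : 0 <= x u by case/andP: (hx u) => /(le_trans (lower_ge0 i u)).
rewrite lowerS upperS; apply/andP; split; apply: Fmap_anti => // u.
- by case/andP: (hx u).
- exact: lower_ge0.
- by case/andP: (hx u).
Qed.

Lemma fixpoint_in_bracket (x : V -> R) : (forall v, 0 <= x v <= c) -> F x = x ->
  forall i v, lower i v <= x v <= upper i v.
Proof.
move=> hx Fx; elim=> [|i IH] v; first exact: hx.
by rewrite -Fx; exact: Fmap_in_bracket.
Qed.

Definition load_gap i v := load (upper i) v - load (lower i) v.

Definition rate : R := zeta * (k.-1)%:R * c ^+ k.-1 / expR 1.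

Lemma rate_ge0 : 0 <= rate.
Proof. by rewrite !(mulr_ge0, divr_ge0) ?exprn_ge0 ?expR_ge0 // ltW. Qed.

Lemma upper_sub_lower_le i v : upper i.+1 v - lower i.+1 v <= c * load_gap i v.
Proof.
rewrite upperS lowerS !FmapE -mulrBr ler_pM2l //; apply: expRN_sub_le.
by rewrite load_ge0 ?load_homo //; [exact: lower_ge0 | exact: lower_le_upper | exact: lower_ge0].
Qed.

Lemma load_gap_le i v : load_gap i v <= zeta * c ^+ k.-1.
Proof.
rewrite /load_gap lerBlDr (le_trans (load_le v _)) ?lerDl ?load_ge0 // => u.
  by rewrite upper_ge0 upper_le.
exact: lower_ge0.
Qed.

(* The iterates of step [i.+1] are within a factor [expR M] of each other;
   [load_sub_le_shrink] and [load_Fmap_sub_le] turn this into a contraction of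
   the load gap two steps later. *)
Lemma load_gap_step i (M : R) : 0 <= M -> (forall w, load_gap i w <= M) ->
  forall v, load_gap i.+2 v <= rate * M.
Proof.
move=> M0 hM v.
have -> : rate * M = zeta * c ^+ k.-1 * ((k.-1)%:R * M * expR (-1)).
  by rewrite /rate expRN; ring.
apply: (@load_Fmap_sub_le (upper i.+1) (lower i.+1)) => [u | | w].
- exact: upper_ge0.
- by rewrite mulr_ge0.
- apply: load_sub_le_shrink => [u|u]; first exact: upper_ge0.
  rewrite upperS lowerS !FmapE mulrCA ler_pM2l // -expRD ler_expR.
  by have := hM u; rewrite /load_gap; lra.
Qed.

Lemma load_gap_geometric j v : load_gap j.*2 v <= zeta * c ^+ k.-1 * rate ^+ j.
Proof.
elim: j v => [|j IH] v; first by rewrite mulr1 load_gap_le.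
rewrite doubleS exprS mulrCA; apply: load_gap_step => //.
by rewrite !mulr_ge0 ?exprn_ge0 ?rate_ge0 // ltW.
Qed.

Lemma bracket_eq v (a b : R) : rate < 1 ->
  (forall i, lower i.+1 v <= a <= upper i.+1 v) ->
  (forall i, lower i.+1 v <= b <= upper i.+1 v) -> a = b.
Proof.
move=> rate_lt1 ha hb; apply/eqP; rewrite -subr_eq0 -normr_le0.
apply: (@le_geometric_le0 _ _ rate (c * (zeta * c ^+ k.-1))) => [|j].
  by rewrite rate_ge0.
rewrite -mulrA; apply: le_trans (ler_wpM2l (ltW c_gt0) (load_gap_geometric j v)).
apply: le_trans (upper_sub_lower_le _ v).
by move: (ha j.*2) (hb j.*2) => /andP[? ?] /andP[? ?]; rewrite ler_norml; apply/andP; split; lra.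
Qed.

Theorem Fmap_fixpoint_unique : rate < 1 ->
  exists! x : V -> R, (forall v, 0 <= x v <= c) /\ F x = x.
Proof.
move=> rate_lt1.
pose x v := sup (range (lower^~ v)).
have x_in i v : lower i v <= x v <= upper i v.
  apply/andP; split.
    by apply: ub_le_sup; [exists (upper 0 v) => _ [j _ <-]; exact: lower_le_upper_any | exists i].
  by apply: ge_sup; [exists (lower 0 v), 0%N | move=> _ [j _ <-]; exact: lower_le_upper_any].
have x_bounds v : 0 <= x v <= c by have := x_in 0%N v.
exists x; split.
  split=> //; apply/funext => v; apply: bracket_eq => // i.
  exact: Fmap_in_bracket.
move=> y [y_bounds Fy]; apply/funext => v; apply: bracket_eq => // i.
exact: fixpoint_in_bracket.
Qed.

End FixedPoint.

(* Only k-uniformity and the divergence of the maximum degree (through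
   [Delta >= 1]) are used: the contraction argument needs no tree-likeness. *)
Theorem mainTheorem8 (R : realType) (k : nat) (c : R) (zeta : nat -> R)
  (V : nat -> finType) (E : forall n, {set {set V n}}) :
  (2 <= k)%N -> 0 < c ->
  (forall n, 0 < zeta n <= 1) ->
  limn_sup (fun n => zeta n * (k.-1)%:R * c ^+ k.-1) < expR 1 ->
  @asymp_tree_like R k V E ->
  exists N, forall n, (N <= n)%N ->
    exists! x : V n -> R,
      (forall v, 0 <= x v <= c) /\ Fmap (E n) c (zeta n) x = x.
Proof.
move=> _ c_gt0 zeta_bounds limsup_lt [uniform Delta_unbounded _ _ _].
have [N1 Delta_ge1] := Delta_unbounded 1%N.
have seq_bounded n : `|zeta n * (k.-1)%:R * c ^+ k.-1| <= (k.-1)%:R * c ^+ k.-1.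
  have /andP[zeta_gt0 zeta_le1] := zeta_bounds n.
  have K_ge0 : 0 <= (k.-1)%:R * c ^+ k.-1 :> R by rewrite mulr_ge0 ?exprn_ge0 // ltW.
  rewrite -mulrA ger0_norm ?ler_piMl //.
  by rewrite mulr_ge0 // ltW.
have [N2 lt_e] := limn_sup_lt_eventually seq_bounded limsup_lt.
exists (maxn N1 N2) => n; rewrite geq_max => /andP[n_N1 n_N2].
have /andP[zeta_gt0 _] := zeta_bounds n.
apply: Fmap_fixpoint_unique => //; first exact: Delta_ge1.
by rewrite /rate ltr_pdivrMr ?expR_gt0 // mul1r lt_e.
Qed.
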